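(* Let $G$ be a finite group, $V$ a finite-dimensional vector space over a field of positive characteristic $p$, and $\varphi:G\to GL(V)$ a representation. For $g\in G$, the coset $Vg$ in the semidirect product $V\rtimes_\varphi G$ contains an element of order $p|g|$ if and only if the Jordan form of $\varphi(g)$ has a unipotent Jordan block (block with eigenvalue $1$) of size $(|g|)_p$.
   Context: For a positive integer $a$, $(a)_p$ denotes the highest power of $p$ dividing $a$. *)

From HB Require Import structures.
From mathcomp Require Import all_boot all_order all_fingroup all_algebra.
From mathcomp Require Import mxrepresentation.
Set Implicit Arguments. Unset Strict Implicit. Unset Printing Implicit Defensive.
Import GRing.Theory.
Local Open Scope ring_scope.

(* V = 'rV[F]_n (row vectors), G acts on the right by v |-> v *m rG g.
   Elements of the semidirect product V x| G are pairs (v, g) ("v g")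
   with product (v, g) * (w, h) = (v *m rG h + w, g * h);
   identity (0, 1); the coset V g is {(v, g) | v in V}. *)
Section SemiDirect.
Variables (F : fieldType) (gT : finGroupType) (G : {group gT}) (n : nat).
Variable rG : mx_representation F G n.

Definition sd_mul (x y : 'rV[F]_n * gT) : 'rV[F]_n * gT :=
  (x.1 *m rG y.2 + y.1, (x.2 * y.2)%g).

Definition sd_one : 'rV[F]_n * gT := (0, 1%g).

Definition sd_pow (x : 'rV[F]_n * gT) (m : nat) : 'rV[F]_n * gT :=
  iter m (fun y => sd_mul y x) sd_one.

Definition sd_has_order (x : 'rV[F]_n * gT) (k : nat) : Prop :=
  (0 < k)%N /\ sd_pow x k = sd_one /\
  (forall m, (0 < m)%N -> (m < k)%N -> sd_pow x m <> sd_one).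
End SemiDirect.

Definition jordan1 (F : fieldType) (k : nat) : 'M[F]_k :=
  \matrix_(i < k, j < k) ((i == j)%:R + (j == i.+1 :> nat)%:R).

Definition has_unipotent_jordan_block (F : fieldType) (n : nat) (A : 'M[F]_n)
    (k : nat) : Prop :=
  exists m (e : (k + m = n)%N) (B : 'M[F]_m) (P : 'M[F]_n),
    P \in unitmx /\
    P *m A *m invmx P = castmx (e, e) (block_mx (jordan1 F k) 0 0 B).

From mathcomp Require Import all_boot all_order all_fingroup all_algebra.
From mathcomp Require Import mxrepresentation cyclic zify.
Set Implicit Arguments. Unset Strict Implicit. Unset Printing Implicit Defensive.
Import GRing.Theory.
Local Open Scope ring_scope.

(* Write A = rG g, N = A - 1 and #[g] = q m with q = #[g]`_p, so that p does
   not divide m. The powers of (v, g) are (v (1 + A + ... + A^(k-1)), g^k),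
   hence Vg contains an element of order p #[g] iff
   S = 1 + A + ... + A^(#[g]-1) is nonzero. In characteristic p,
   S = N^(q-1) Psi with Psi = (1 + A + ... + A^(m-1))^q, and Psi acts on rows
   fixed by A as multiplication by the unit m^q.
   A Jordan block J_q(1) provides a row y with y N^(q-1) nonzero and fixed by
   A, so y S <> 0. Conversely, if S <> 0 then Psi N^(q-1) Psi = m^q S <> 0
   while Psi N^q = N^q Psi = N S = 0. A row w and a column c of Psi with
   w N^(q-1) c <> 0 give chains w N^i and N^j c (i, j < q) whose pairing
   matrix (w N^(i+j) c) is anti-triangular with nonzero anti-diagonal: the
   first chain spans a J_q(1)-block and the common kernel of the second is an
   A-stable complement. *)

Section BlockDiagSimilarity.
Variables (F : fieldType) (n k : nat) (A : 'M[F]_n) (J : 'M[F]_k).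

(* [has_unipotent_jordan_block A k] unfolds to
   [block_diag_similar A (jordan1 F k)]. *)
Definition block_diag_similar : Prop :=
  exists m (e : (k + m = n)%N) (B : 'M[F]_m) (P : 'M[F]_n),
    P \in unitmx /\ P *m A *m invmx P = castmx (e, e) (block_mx J 0 0 B).

Lemma block_diag_similar_intertwiner :
  block_diag_similar -> exists U : 'M[F]_(k, n), row_free U /\ U *m A = J *m U.
Proof.
case=> m [e [B [P [Punit]]]]; case: n / e A P Punit => A0 P Punit.
rewrite castmx_id => /(canRL (mulmxKV Punit)) PA.
exists (usubmx P); split.
  apply/row_freeP; exists (lsubmx (invmx P)).
  by rewrite mulmx_lsub mul_usub_mx mulmxV // scalar_mx_block; apply: block_mxKul.
rewrite mul_usub_mx PA -{1}(vsubmxK P) mul_block_col.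
by rewrite col_mxKu mul0mx addr0.
Qed.

Lemma row_free_block_diag_similar r (P : 'M[F]_(k + r, n)) (B : 'M[F]_r) :
  (k + r = n)%N -> row_free P -> P *m A = block_mx J 0 0 B *m P ->
  block_diag_similar.
Proof.
move=> e Pfree PA; exists r, e, B; case: n / e A P Pfree PA => A0 P Pfree PA.
have Punit : P \in unitmx by rewrite -row_free_unit.
by exists P; rewrite castmx_id PA mulmxK.
Qed.

Lemma block_diag_similar_of_dual_chains (J' : 'M[F]_k) (U : 'M[F]_(k, n))
    (K : 'M[F]_(n, k)) :
  U *m K \in unitmx -> U *m A = J *m U -> A *m K = K *m J' ->
  block_diag_similar.
Proof.
move=> UKunit UA AK.
set W := row_base (kermx K).
have WK : W *m K = 0 by apply/sub_kermxP; rewrite eq_row_base.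
have WA : (W *m A <= W)%MS.
  by rewrite eq_row_base; apply/sub_kermxP; rewrite -mulmxA AK mulmxA WK mul0mx.
have UK_inj r (X : 'M[F]_(r, k)) : X *m U *m K = 0 -> X = 0.
  by move=> XUK; rewrite -[X](mulmxK UKunit) mulmxA XUK mul0mx.
have rankUK : \rank (U *m K) = k by apply/eqP; rewrite -/(row_free _) row_free_unit.
have rankU : \rank U = k.
  by apply/eqP; rewrite eqn_leq rank_leq_row -{1}rankUK mxrankM_maxl.
have rankK : \rank K = k.
  by apply/eqP; rewrite eqn_leq rank_leq_col -{1}rankUK mxrankM_maxr.
have UW0 : (U :&: W)%MS = 0.
  have /submxP [X UWE] := capmxSl U W.
  have : (U :&: W <= kermx K)%MS by rewrite (submx_trans (capmxSr U W)) ?eq_row_base.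
  by move/sub_kermxP; rewrite UWE => /UK_inj ->; rewrite mul0mx.
have e : (k + \rank (kermx K) = n)%N.
  by rewrite mxrank_ker rankK subnKC // -{1}rankU rank_leq_col.
have Pfree : row_free (col_mx U W).
  by rewrite /row_free -addsmxE mxrank_disjoint_sum // rankU (eqP (row_base_free _)).
apply: (row_free_block_diag_similar (B := W *m A *m pinvmx W) e Pfree).
by rewrite mul_col_mx mul_block_col !mul0mx addr0 add0r UA mulmxKpV.
Qed.
End BlockDiagSimilarity.

Section JordanChains.
Variables (F : fieldType) (n : nat).

Definition shift_mx k : 'M[F]_k := \matrix_(i, j) (j == i.+1 :> nat)%:R.

Lemma jordan1E k : jordan1 F k = 1%:M + shift_mx k.
Proof. by apply/matrixP => i j; rewrite !mxE. Qed.

(* The [i]-th standard basis row of length [k], zero when [k <= i]. *)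
Definition unit_row k i : 'rV[F]_k := \row_j (j == i :> nat)%:R.

Lemma unit_row_ord k (i : 'I_k) : unit_row k i = delta_mx 0 i.
Proof. by apply/rowP => j; rewrite !mxE. Qed.

Lemma unit_row_oversize k i : (k <= i)%N -> unit_row k i = 0.
Proof.
move=> le_ki; apply/rowP => j; rewrite !mxE.
by case: eqP => // ji; move: (ltn_ord j); lia.
Qed.

Lemma unit_row_shift k i : unit_row k i *m shift_mx k = unit_row k i.+1.
Proof.
have [lt_ik | le_ki] := ltnP i k; last first.
  by rewrite !unit_row_oversize ?mul0mx //; lia.
rewrite -[i]/(nat_of_ord (Ordinal lt_ik)) unit_row_ord -rowE.
by apply/rowP => j; rewrite !mxE.
Qed.

Definition krylov_mx k (u : 'rV[F]_n) (N : 'M[F]_n) : 'M[F]_(k, n) :=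
  \matrix_(i < k) (u *m N ^+ i).

Lemma unit_row_krylov k u N i :
  u *m N ^+ k = 0 -> unit_row k i *m krylov_mx k u N = u *m N ^+ i.
Proof.
move=> uN0; have [lt_ik | le_ki] := ltnP i k.
  by rewrite -[i]/(nat_of_ord (Ordinal lt_ik)) unit_row_ord -rowE rowK.
rewrite unit_row_oversize // mul0mx -(subnKC le_ki) exprD -mulmxE mulmxA.
by rewrite uN0 mul0mx.
Qed.

Lemma krylov_mx_shift k u N :
  u *m N ^+ k = 0 -> krylov_mx k u N *m N = shift_mx k *m krylov_mx k u N.
Proof.
move=> uN0; apply/row_matrixP => i.
rewrite !row_mul rowK rowE -unit_row_ord unit_row_shift unit_row_krylov //.
by rewrite exprSr -mulmxE mulmxA.
Qed.
End JordanChains.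

Arguments shift_mx {F} k.
Arguments unit_row {F} k i.

Lemma trmxX (R : comPzSemiRingType) n (M : 'M[R]_n) i : (M ^+ i)^T = M^T ^+ i.
Proof.
elim: i => [|i IH]; first by rewrite !expr0 trmx1.
by rewrite exprS exprSr -!mulmxE trmx_mul IH.
Qed.

Lemma hankel_unitmx (F : fieldType) k (t : nat -> F) :
  t k.-1 != 0 -> (forall l, (k <= l)%N -> t l = 0) ->
  \matrix_(i < k, j < k) t (i + j)%N \in unitmx.
Proof.
move=> t_nz t_high; set H := \matrix_(i, j) _.
(* Reversing the rows makes [H] triangular with constant diagonal [t k.-1]. *)
pose s : 'S_k := perm (@rev_ord_inj k).
have trigH : is_trig_mx (row_perm s H).
  by apply/is_trig_mxP => i j lt_ij; rewrite !mxE /s permE t_high //=; lia.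
have := det_trig trigH; rewrite {1}row_permE det_mulmx det_perm unitmxE unitfE.
rewrite (eq_bigr (fun=> t k.-1)) => [|i _]; last first.
  by rewrite !mxE /s permE /=; congr t; have := ltn_ord i; lia.
rewrite prodr_const card_ord => detE; apply: contra_neq (expf_neq0 k t_nz) => H0.
by rewrite -detE H0 mulr0.
Qed.

Section UnipotentBlocks.
Variables (F : fieldType) (n : nat) (A : 'M[F]_n).
Local Notation N := (A - 1%:M).

Lemma krylov_mx_jordan k u :
  u *m N ^+ k = 0 -> krylov_mx k u N *m A = jordan1 F k *m krylov_mx k u N.
Proof.
move=> uN0; rewrite jordan1E mulmxDl mul1mx -krylov_mx_shift //.
by rewrite mulmxBr mulmx1 addrCA subrr addr0.
Qed.

Lemma jordan_chain k (U : 'M[F]_(k, n)) i :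
  U *m A = jordan1 F k *m U -> unit_row k 0 *m U *m N ^+ i = unit_row k i *m U.
Proof.
move=> UA; have UN : U *m N = shift_mx k *m U.
  by rewrite mulmxBr mulmx1 UA jordan1E mulmxDl mul1mx addrAC subrr add0r.
elim: i => [|i IH]; first by rewrite expr0 mulmx1.
by rewrite exprSr -mulmxE mulmxA IH -mulmxA UN mulmxA unit_row_shift.
Qed.

Lemma unipotent_block_chain k : (0 < k)%N -> has_unipotent_jordan_block A k ->
  exists y : 'rV[F]_n, y *m N ^+ k.-1 != 0 /\ y *m N ^+ k = 0.
Proof.
move=> k_gt0 /block_diag_similar_intertwiner [U [Ufree UA]].
exists (unit_row k 0 *m U).
rewrite !jordan_chain // (unit_row_oversize _ (leqnn k)) mul0mx.
split=> //; have lt_k1k : (k.-1 < k)%N by rewrite prednK.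
rewrite -[k.-1]/(nat_of_ord (Ordinal lt_k1k)) unit_row_ord mulmx_free_eq0 //.
apply/eqP => /matrixP /(_ 0 (Ordinal lt_k1k)).
by rewrite !mxE !eqxx; apply/eqP/oner_neq0.
Qed.
End UnipotentBlocks.

Lemma mulmx_entry (R : pzSemiRingType) m n p (X : 'M[R]_(m, n))
    (Y : 'M[R]_(n, p)) i j :
  (X *m Y) i j = (row i X *m col j Y) 0 0.
Proof. by rewrite !mxE; apply: eq_bigr => l _; rewrite !mxE. Qed.

Lemma unipotent_block_of_pairing (F : fieldType) n (A : 'M[F]_n) r s q
    (W : 'M[F]_(r, n)) (C : 'M[F]_(n, s)) :
  W *m (A - 1%:M) ^+ q = 0 -> (A - 1%:M) ^+ q *m C = 0 ->
  W *m (A - 1%:M) ^+ q.-1 *m C != 0 -> has_unipotent_jordan_block A q.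
Proof.
set N := A - 1%:M => WN0 NC0 /matrix0Pn [i [j nzWC]].
set w := row i W; set c := col j C.
have trN : N^T = A^T - 1%:M by rewrite linearB /= trmx1.
have wN0 : w *m N ^+ q = 0 by rewrite -row_mul WN0 row0.
have cN0 : c^T *m (A^T - 1%:M) ^+ q = 0.
  by rewrite -trN -trmxX tr_col -row_mul -trmx_mul NC0 trmx0 row0.
set U := krylov_mx q w N; set K := (krylov_mx q c^T (A^T - 1%:M))^T.
have UK : U *m K = \matrix_(a < q, b < q) (w *m N ^+ (a + b) *m c) 0 0.
  apply/matrixP => a b; rewrite mulmx_entry [RHS]mxE rowK -tr_row rowK trmx_mul.
  by rewrite -trN -trmxX !trmxK exprD -mulmxE !mulmxA.
apply: (block_diag_similar_of_dual_chains (J' := (jordan1 F q)^T) (U := U) (K := K)).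
- rewrite UK; apply: (hankel_unitmx (t := fun l => (w *m N ^+ l *m c) 0 0)).
    by rewrite mulmx_entry row_mul in nzWC.
  by move=> l le_ql; rewrite -(subnKC le_ql) exprD -mulmxE mulmxA wN0 !mul0mx mxE.
- exact: krylov_mx_jordan.
- by apply: trmx_inj; rewrite !trmx_mul !trmxK krylov_mx_jordan.
Qed.

Lemma sum_expr_period (R : pzSemiRingType) (x : R) o j :
  x ^+ o = 1 -> \sum_(i < o * j) x ^+ i = (\sum_(i < o) x ^+ i) *+ j.
Proof.
move=> xo1; elim: j => [|j IH]; first by rewrite muln0 big_ord0 mulr0n.
rewrite mulnS addnC big_split_ord IH mulrSr; congr (_ + _).
by apply: eq_bigr => i _; rewrite exprD exprM xo1 expr1n mul1r.
Qed.

Lemma geom_sum_pchar (R : idomainType) q m : [pchar R].-nat q ->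
  \sum_(i < q * m) ('X : {poly R}) ^+ i =
  ('X - 1) ^+ q.-1 * (\sum_(j < m) 'X ^+ j) ^+ q.
Proof.
move=> qnat; have q_gt0 : (0 < q)%N by case/andP: qnat.
have qnatX : [pchar {poly R}].-nat q by rewrite (eq_pnat _ (@pchar_poly R)).
have X1_neq0 : ('X - 1 : {poly R}) != 0 by rewrite -polyC1 polyXsubC_eq0.
apply: (mulIf X1_neq0); rewrite [LHS]mulrC -subrX1 mulrAC -exprSr prednK //.
rewrite -exprMn -subrX1 exprDn_pchar // exprNn_pchar // expr1n.
by rewrite -exprM mulnC.
Qed.

Lemma horner_mx_fixed (F : fieldType) n (A : 'M[F]_n.+1) r
    (X : 'M[F]_(r, n.+1)) p :
  X *m A = X -> X *m horner_mx A p = p.[1] *: X.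
Proof.
move=> XA; elim/poly_ind: p => [|p a IH].
  by rewrite rmorph0 mulmx0 horner0 scale0r.
rewrite rmorphD rmorphM /= horner_mx_X horner_mx_C hornerMXaddC mulr1.
by rewrite mulmxDr -mulmxE mulmxA IH -scalemxAl XA mul_mx_scalar scalerDl.
Qed.

Lemma unipotent_jordan_block_geom_sum (F : fieldType) n (A : 'M[F]_n.+1) q m :
  [pchar F].-nat q -> [pchar F]^'.-nat m -> A ^+ (q * m) = 1 ->
  has_unipotent_jordan_block A q <-> \sum_(i < q * m) A ^+ i != 0.
Proof.
move=> qnat mnat Aqm; have q_gt0 : (0 < q)%N by case/andP: qnat.
set N := A - 1%:M; pose Phi := \sum_(j < m) ('X : {poly F}) ^+ j.
set Psi := horner_mx A (Phi ^+ q).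
have SE : \sum_(i < q * m) A ^+ i = N ^+ q.-1 * Psi.
  transitivity (horner_mx A (\sum_(i < q * m) 'X ^+ i)).
    by rewrite rmorph_sum; apply: eq_bigr => i _; rewrite rmorphXn /= horner_mx_X.
  by rewrite geom_sum_pchar // rmorphM rmorphXn rmorphB /= horner_mx_X rmorph1.
have Psi1_neq0 : (Phi ^+ q).[1] != 0.
  rewrite horner_exp horner_sum (eq_bigr (fun=> 1)) => [|j _].
    by rewrite sumr_const card_ord expf_neq0 // natf_neq0_pchar.
  by rewrite hornerXn expr1n.
have PsiA : Psi * A = A * Psi.
  have := comm_horner_mx (Phi ^+ q) (erefl : comm_mx A A).
  by rewrite /comm_mx !mulmxE.
have PsiN : GRing.comm Psi N by rewrite /GRing.comm mulrBr mulrBl mulr1 mul1r PsiA.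
have fixedPsi r (X : 'M[F]_(r, n.+1)) : X *m N = 0 -> X *m Psi = (Phi ^+ q).[1] *: X.
  rewrite mulmxBr mulmx1 => /eqP; rewrite subr_eq0 => /eqP.
  exact: horner_mx_fixed.
have Nq : N ^+ q = N * N ^+ q.-1 by rewrite -exprS prednK.
have NqPsi : N ^+ q * Psi = 0 by rewrite Nq -mulrA -SE -subrX1 Aqm subrr.
split.
- case/(unipotent_block_chain q_gt0) => y [yN_neq0 yN0].
  apply: contraNneq yN_neq0 => S0.
  have : y *m N ^+ q.-1 *m Psi = 0 by rewrite -mulmxA mulmxE -SE S0 mulmx0.
  rewrite fixedPsi; last by rewrite -mulmxA mulmxE -exprSr prednK.
  by move/eqP; rewrite scaler_eq0 (negPf Psi1_neq0) /=.
- move=> S_neq0; apply: (unipotent_block_of_pairing (W := Psi) (C := Psi)).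
  + by rewrite mulmxE (commrX q PsiN).
  + by rewrite mulmxE.
  + rewrite !mulmxE (commrX _ PsiN) -SE -mulmxE fixedPsi.
      by rewrite scaler_eq0 negb_or Psi1_neq0.
    by rewrite SE mulmxE -mulrA PsiN mulrA -exprSr prednK.
Qed.

Section SemidirectPowers.
Variables (F : fieldType) (gT : finGroupType) (G : {group gT}) (n : nat).
Variable rG : mx_representation F G n.

Lemma sd_pow_pair v g k :
  sd_pow rG (v, g) k = (v *m \sum_(i < k) rG g ^+ i, (g ^+ k)%g).
Proof.
elim: k => [|k IH]; first by rewrite big_ord0 mulmx0 expg0.
rewrite /sd_pow iterS -/(sd_pow rG (v, g) k) IH /sd_mul /= expgSr.
rewrite big_ord_recl expr0 mulmxDr mulmx1 addrC -mulmxA mulmx_suml.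
by congr (_ + v *m _, _); apply: eq_bigr => i _; rewrite exprSr mulmxE.
Qed.

Lemma repr_mx_order g : g \in G -> rG g ^+ #[g]%g = 1.
Proof.
move=> Gg; have rGX k : rG (g ^+ k)%g = rG g ^+ k.
  elim: k => [|k IH]; first by rewrite expg0 repr_mx1.
  by rewrite expgSr exprSr repr_mxM ?groupX // IH mulmxE.
by rewrite -rGX expg_order repr_mx1.
Qed.

Lemma sd_has_order_pchar p v g : p \in [pchar F] -> g \in G ->
  sd_has_order rG (v, g) (p * #[g]%g)%N <-> v *m \sum_(i < #[g]%g) rG g ^+ i != 0.
Proof.
move=> chp Gg; have p_gt1 := prime_gt1 (pcharf_prime chp).
have o_gt0 : (0 < #[g]%g)%N := order_gt0 g.
set S := \sum_(i < _) _.
have sd_pow_order j : sd_pow rG (v, g) (#[g]%g * j) = ((v *m S) *+ j, 1%g).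
  rewrite sd_pow_pair sum_expr_period ?repr_mx_order //.
  by rewrite -scaler_nat -scalemxAr scaler_nat expgM expg_order expg1n.
split=> [[_ [_ minimal]] | vS_neq0].
  apply: contra_notN (minimal #[g]%g o_gt0 _) => [/eqP vS0|].
    by rewrite -[#[g]%g]muln1 sd_pow_order vS0 mulr1n.
  by rewrite -{1}[#[g]%g]mul1n ltn_mul2r o_gt0.
split; first by rewrite muln_gt0 o_gt0 (ltnW p_gt1).
split; first by rewrite mulnC sd_pow_order -scaler_nat (pcharf0 chp) scale0r.
move=> k k_gt0 lt_k_po; rewrite sd_pow_pair => -[Sk /eqP].
rewrite -order_dvdn => /dvdnP [j kE]; move: Sk k_gt0 lt_k_po; rewrite kE mulnC.
rewrite sum_expr_period ?repr_mx_order // -scaler_nat -scalemxAr => /eqP.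
rewrite scaler_eq0 (negPf vS_neq0) orbF -(dvdn_pcharf chp) muln_gt0 o_gt0.
by rewrite [(p * _)%N]mulnC ltn_mul2l o_gt0 => /dvdn_leq le_pj /le_pj; lia.
Qed.
End SemidirectPowers.

Lemma exists_row_mulmx_neq0 (F : fieldType) r n (M : 'M[F]_(r, n)) :
  (exists v : 'rV[F]_r, v *m M != 0) <-> M != 0.
Proof.
split=> [[v] | /rowV0Pn [w /submxP [v ->] vM_neq0]]; last by exists v.
by apply: contraNneq => ->; rewrite mulmx0.
Qed.

Theorem lemma1p12 (F : fieldType) (p : nat) (gT : finGroupType) (G : {group gT})
    (n : nat) (rG : mx_representation F G n) (g : gT) :
  (p \in [pchar F])%R -> g \in G ->
  (exists v : 'rV[F]_n, sd_has_order rG (v, g) (p * #[g]%g)%N) <->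
  has_unipotent_jordan_block (rG g) (#[g]%g`_p)%N.
Proof.
move=> chp Gg; set o := #[g]%g.
apply: (@iff_trans _ (\sum_(i < o) rG g ^+ i != 0)).
  rewrite -exists_row_mulmx_neq0.
  by split=> -[v vH]; exists v; apply/(sd_has_order_pchar rG v chp Gg).
case: n rG => [|n] rG.
  split=> [|[m [e _]]]; first by rewrite flatmx0 eqxx.
  by move: e (part_gt0 p o); lia.
have oE : o = (o`_p * o`_p^')%N by rewrite partnC // order_gt0.
have := @unipotent_jordan_block_geom_sum F n (rG g) o`_p o`_p^'.
rewrite -oE => blockE; apply: iff_sym; apply: blockE.
- by rewrite (eq_pnat _ (pcharf_eq chp)) part_pnat.
- by rewrite (eq_pnat _ (eq_negn (pcharf_eq chp))) part_pnat.
- exact: repr_mx_order.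
Qed.
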